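(* Let $f\colon 2^{\mathcal{N}}\to\mathbb{R}$ be non-negative and submodular, let $k$ be a positive integer, let $\varepsilon>0$, and let $S,O\subseteq\mathcal{N}$ with $|S|=|O|=k$. Assume $\mathcal{N}\setminus S$ contains at least $k$ elements $d$ with $f(d\mid S)\ge 0$. Suppose that for every integer $0\le t\le k$, \[ \max_{T\subseteq\mathcal{N}\setminus S,\ |T|=t}\ \sum_{u\in T} f(u\mid S)\ \le\ \min_{T\subseteq S,\ |T|=t}\ \sum_{v\in T} f(v\mid S-v)\ +\ \varepsilon f(S). \] Then \[ f(S)\ \ge\ \frac{f(S\cup O)+f(S\cap O)}{2+\varepsilon}\qquad\text{and}\qquad f(S)\ \ge\ \frac{f(S\cap O)}{1+\varepsilon}. \]
   Context: Notation: $f(u\mid A)=f(A\cup\{u\})-f(A)$; $S-v=S\setminus\{v\}$. Submodularity: $f(A\cup\{s\})-f(A)\ge f(B\cup\{s\})-f(B)$ for all $A\subseteq B\subseteq\mathcal{N}$, $s\notin B$. *)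

From mathcomp Require Import all_boot all_order all_algebra.
Set Implicit Arguments. Unset Strict Implicit. Unset Printing Implicit Defensive.
Import Order.TTheory GRing.Theory Num.Theory.
Local Open Scope ring_scope.

Definition marg (T : finType) (R : pzRingType) (f : {set T} -> R) (u : T) (A : {set T}) : R :=
  f (u |: A) - f A.

Definition submodular (T : finType) (R : realDomainType) (f : {set T} -> R) : Prop :=
  forall (A B : {set T}) (s : T), A \subset B -> s \notin B ->
    f (s |: B) - f B <= f (s |: A) - f A.

Definition nonneg_setfun (T : finType) (R : realDomainType) (f : {set T} -> R) : Prop :=
  forall A : {set T}, 0 <= f A.

From mathcomp Require Import all_boot all_order all_algebra.
From mathcomp Require Import lra.
Import Order.TTheory GRing.Theory Num.Theory.
Local Open Scope ring_scope.

(* Write A := O \ S and B := S \ O, so |A| = |B|.  Submodularity bounds the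
   gain f(S u O) - f(S) from above by the sum of the marginals f(u | S) over A,
   and bounds the loss f(S) - f(S n O) from below by the sum of the removal
   marginals f(v | S - v) over B.  The hypothesis with T1 = A, T2 = B links the
   two sums and gives the first inequality; taking instead for T1 a set of |B|
   elements with non-negative marginals gives the second. *)

Lemma exists_subset_card (T : finType) (n : nat) (D : {set T}) :
  (n <= #|D|)%N -> exists2 E : {set T}, E \subset D & #|E| = n.
Proof.
elim: n => [|n IHn] leD; first by exists set0; rewrite ?sub0set ?cards0.
have [E sED cardE] := IHn (ltnW leD).
have : (0 < #|D :\: E|)%N by rewrite cardsD (setIidPr sED) cardE subn_gt0.
case/card_gt0P => x; rewrite inE => /andP [xNE xD].
exists (x |: E); first by rewrite subUset sub1set xD sED.
by rewrite cardsU1 xNE cardE.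
Qed.

Section Marginals.

Variables (T : finType) (R : realFieldType) (f : {set T} -> R).
Hypothesis f_submod : submodular f.

Lemma marg_mem (u : T) (A : {set T}) : u \in A -> marg f u A = 0.
Proof. by move=> uA; rewrite /marg (setUidPr _) ?subrr // sub1set. Qed.

Lemma marg_le_subset (u : T) (A B : {set T}) :
  A \subset B -> u \notin B :\: A -> marg f u B <= marg f u A.
Proof.
move=> sAB; rewrite inE negb_and negbK.
have [uA _ | uNA /= uNB] := boolP (u \in A).
  by rewrite !marg_mem // (subsetP sAB).
exact: f_submod.
Qed.

Lemma union_gain_le_sum_marg (X Y : {set T}) :
  f (X :|: Y) - f X <= \sum_(u in Y) marg f u X.
Proof.
have [n] := ubnP #|Y|; elim: n Y => // n IHn Y /ltnSE cardY.
have [-> | [u uY]] := set_0Vmem Y; first by rewrite setU0 big_set0 subrr.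
rewrite (big_setD1 _ uY) /=.
have IHY : f (X :|: Y :\ u) - f X <= \sum_(v in Y :\ u) marg f v X.
  by apply: IHn; rewrite (cardsD1 u Y) uY in cardY.
have step : f (X :|: Y) - f (X :|: Y :\ u) <= marg f u X.
  rewrite -{1}(setD1K uY) setUCA -/(marg f u _).
  apply: marg_le_subset; first exact: subsetUl.
  by rewrite !inE eqxx /= orbF andNb.
lra.
Qed.

Lemma sum_marg_removal_le_gain (W Z B : {set T}) :
  [disjoint Z & B] -> Z :|: B \subset W ->
  \sum_(v in B) marg f v (W :\ v) <= f (Z :|: B) - f Z.
Proof.
have [n] := ubnP #|B|; elim: n B => // n IHn B /ltnSE cardB disZB sZBW.
have [-> | [u uB]] := set_0Vmem B; first by rewrite setU0 big_set0 subrr.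
rewrite (big_setD1 _ uB) /=.
have sBuB : B :\ u \subset B := subD1set B u.
have IHB : \sum_(v in B :\ u) marg f v (W :\ v) <= f (Z :|: B :\ u) - f Z.
  apply: IHn; first by rewrite (cardsD1 u B) uB in cardB.
    exact: disjointWr disZB.
  by apply: subset_trans sZBW; apply: setUS.
have uNZ : u \notin Z by rewrite (disjointFl disZB).
have uW : u \in W by rewrite (subsetP sZBW) // inE uB orbT.
have step : marg f u (W :\ u) <= f (Z :|: B) - f (Z :|: B :\ u).
  rewrite -{1}(setD1K uB) setUCA -/(marg f u _).
  apply: marg_le_subset; last by rewrite !inE eqxx andbF.
  apply/subsetP => x; rewrite !inE => /orP [xZ | /andP [-> xB]].
    by rewrite (subsetP sZBW) ?inE ?xZ // andbT; apply: contraNneq uNZ => <-.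
  by rewrite (subsetP sZBW) // inE xB orbT.
lra.
Qed.

End Marginals.

Theorem mainTheorem3 (T : finType) (R : realFieldType) (f : {set T} -> R)
  (k : nat) (eps : R) (S O : {set T}) :
  nonneg_setfun f -> submodular f ->
  (0 < k)%N -> 0 < eps ->
  #|S| = k -> #|O| = k ->
  (k <= #|[set d in ~: S | (0 <= marg f d S)%R]|)%N ->
  (forall t : nat, (t <= k)%N ->
     forall T1 T2 : {set T},
       T1 \subset ~: S -> #|T1| = t ->
       T2 \subset S -> #|T2| = t ->
       \sum_(u in T1) marg f u S <=
       \sum_(v in T2) marg f v (S :\ v) + eps * f S) ->
  (f (S :|: O) + f (S :&: O)) / (2 + eps) <= f S /\
  f (S :&: O) / (1 + eps) <= f S.
Proof.
move=> f_ge0 f_submod _ eps_gt0 cardS cardO cardD swap.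
set m := #|S :\: O|.
have m_le_k : (m <= k)%N by rewrite -cardS subset_leq_card ?subsetDl.
have cardOS : #|O :\: S| = m by rewrite /m !cardsD cardS cardO setIC.
have swapB (T1 : {set T}) : T1 \subset ~: S -> #|T1| = m ->
    \sum_(u in T1) marg f u S <= \sum_(v in S :\: O) marg f v (S :\ v) + eps * f S.
  by move=> sT1 cardT1; apply: (swap m) => //; apply: subsetDl.
have gain : f (S :|: O) - f S <= \sum_(u in O :\: S) marg f u S.
  have -> : S :|: O = S :|: O :\: S by rewrite setDE setUIr setUCr setIT.
  exact: union_gain_le_sum_marg.
have loss : \sum_(v in S :\: O) marg f v (S :\ v) <= f S - f (S :&: O).
  rewrite -[X in _ <= f X - _](setID S O).
  apply: sum_marg_removal_le_gain; rewrite ?setID //.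
  rewrite -setI_eq0; apply/eqP/setP => x; rewrite !inE.
  by case: (x \in O); rewrite ?andbF.
have [G sGD cardG] := @exists_subset_card _ _ _ (leq_trans m_le_k cardD).
have sGNS : G \subset ~: S.
  by apply: subset_trans sGD _; apply/subsetP => x; rewrite inE => /andP [].
have sumG_ge0 : 0 <= \sum_(u in G) marg f u S.
  by apply: sumr_ge0 => u /(subsetP sGD); rewrite inE => /andP [].
have := swapB _ (subsetDr O S) cardOS; have := swapB _ sGNS cardG.
have := f_ge0 S; have := f_ge0 (S :|: O); have := f_ge0 (S :&: O).
by split; rewrite ler_pdivrMr; lra.
Qed.
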